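(* Let $D=(V,A,w)$ be a weighted digraph and let $M$ be a matching in $D$ (a set of arcs no two of which share an endpoint). Then $\mathrm{mac}(D)\ge\frac{w(D)}{4}+\frac{w(M)}{4}$.
   Context: A weighted digraph $D=(V,A,w)$ is a digraph without loops or parallel arcs (opposite arcs allowed) with weights $w:A\to\mathbb{R}_{\ge0}$; $w(\cdot)$ of an arc set is its total weight. For a partition $(X,Y)$ of $V$, $w(X,Y)$ is the total weight of arcs from $X$ to $Y$, and $\mathrm{mac}(D)=\max_{(X,Y)}w(X,Y)$. *)

From mathcomp Require Import all_boot all_order all_algebra.
Set Implicit Arguments. Unset Strict Implicit. Unset Printing Implicit Defensive.
Import Order.TTheory GRing.Theory Num.Theory.
Local Open Scope ring_scope.

(* A weighted digraph on vertex set V (a finType): arc relation A (no loops;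
   as a relation there are no parallel arcs, opposite arcs allowed) and
   nonnegative weights w on arcs. *)
Definition loopless (V : finType) (A : rel V) := forall x, ~~ A x x.

Definition wset (R : numDomainType) (V : finType) (w : V -> V -> R)
  (S : {set V * V}) : R := \sum_(a in S) w a.1 a.2.

Definition wtotal (R : numDomainType) (V : finType) (A : rel V)
  (w : V -> V -> R) : R := \sum_(a : V * V | A a.1 a.2) w a.1 a.2.

Definition wcut (R : numDomainType) (V : finType) (A : rel V)
  (w : V -> V -> R) (X Y : {set V}) : R :=
  \sum_(a : V * V | [&& A a.1 a.2, a.1 \in X & a.2 \in Y]) w a.1 a.2.

Definition mac (R : realDomainType) (V : finType) (A : rel V)
  (w : V -> V -> R) : R :=
  \big[Num.max/0]_(X : {set V}) wcut A w X (~: X).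

Definition is_matching (V : finType) (A : rel V) (M : {set V * V}) :=
  (forall a, a \in M -> A a.1 a.2) /\
  (forall a b, a \in M -> b \in M -> a != b ->
     [/\ a.1 != b.1, a.1 != b.2, a.2 != b.1 & a.2 != b.2]).

From mathcomp Require Import all_boot all_order all_algebra.
From mathcomp Require Import ring lra.
Import Order.TTheory GRing.Theory Num.Theory.
Set Implicit Arguments. Unset Strict Implicit. Unset Printing Implicit Defensive.
Local Open Scope ring_scope.

(* Proof by averaging over a random cut that respects the matching.
   For a matching M, every head x of an arc (u, x) of M has a unique partner
   u, and no vertex is both a head and a tail of M.  For each S ⊆ V put
     X(S) = {x | x is not a head and x ∈ S} ∪ {x | x is a head, partner x ∉ S}.
   Each arc (u, x) of M crosses from X(S) to its complement for every S
   (u ∈ X(S) iff u ∈ S iff x ∉ X(S)); every other arc xy has its two ends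
   controlled by the membership of two vertices of S which are either equal
   (then xy crosses for half of the S) or distinct (then for a quarter of
   the S).  Summing the weights,
     Σ_S w(X(S), V∖X(S)) ≥ 2^|V| (w(D)/4 + w(M)/4),
   and since every term is at most mac(D), the theorem follows. *)

Section CountingSubsets.
Variables (R : realFieldType) (V : finType).

Definition count_sets (P : pred {set V}) : R := \sum_(S : {set V}) (P S)%:R.

Definition nsets : R := #|{set V}|%:R.

Lemma nsetsE : nsets = \sum_(S : {set V}) 1.
Proof. by rewrite sumr_const. Qed.

Lemma nsets_gt0 : 0 < nsets.
Proof. by rewrite ltr0n; apply/card_gt0P; exists set0. Qed.

Lemma count_setsC (P : pred {set V}) :
  count_sets P + count_sets (fun S => ~~ P S) = nsets.
Proof.
rewrite /count_sets -big_split /=.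
under eq_bigr => S _ do rewrite -natrD /= addnC addn_negb.
by rewrite nsetsE.
Qed.

(* Toggling the membership of u is an involution on subsets, changing the
   membership of u only; it lets us transport counts between patterns. *)
Definition toggle (u : V) (S : {set V}) : {set V} :=
  if u \in S then S :\ u else u |: S.

Lemma toggleK u : involutive (toggle u).
Proof.
move=> S; rewrite /toggle; case: (boolP (u \in S)) => uS.
  by rewrite setD11 setD1K.
by rewrite setU11 setU1K.
Qed.

Lemma mem_toggle u S : (u \in toggle u S) = (u \notin S).
Proof. by rewrite /toggle; case: (u \in S); rewrite ?setD11 ?setU11. Qed.

Lemma mem_toggle_other u v S : u != v -> (v \in toggle u S) = (v \in S).
Proof.
move=> uv; rewrite /toggle; case: (u \in S);
  by rewrite ?in_setD1 ?in_setU1 eq_sym (negbTE uv).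
Qed.

Lemma count_sets_toggle u (P : pred {set V}) :
  count_sets P = count_sets (fun S => P (toggle u S)).
Proof. exact: (reindex_inj (can_inj (toggleK u))). Qed.

Lemma count_sets_mem1 u (b : bool) :
  count_sets (fun S => (u \in S) == b) = nsets / 2%:R.
Proof.
have flip : count_sets (fun S => (u \in S) == b) =
            count_sets (fun S => (u \in S) != b).
  rewrite (count_sets_toggle u); apply: eq_bigr => S _.
  by rewrite mem_toggle /=; case: (u \in S); case: b.
have := count_setsC (fun S => (u \in S) == b); rewrite -flip; lra.
Qed.

Lemma count_sets_mem2 u v (b c : bool) : u != v ->
  count_sets (fun S => ((u \in S) == b) && ((v \in S) == c)) = nsets / 4%:R.
Proof.
move=> uv; pose cnt c := count_sets (fun S => ((u \in S) == b) && ((v \in S) == c)).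
have flip_v : cnt c = cnt (~~ c).
  rewrite /cnt (count_sets_toggle v); apply: eq_bigr => S _.
  rewrite mem_toggle mem_toggle_other 1?eq_sym //.
  by case: (v \in S); case: c.
have split_v : cnt c + cnt (~~ c) = nsets / 2%:R.
  rewrite -(count_sets_mem1 u b) /cnt /count_sets -big_split /=.
  apply: eq_bigr => S _; rewrite -natrD; clear flip_v cnt.
  by case: (u \in S); case: (v \in S); case: b; case: c.
rewrite -/(cnt c); lra.
Qed.

End CountingSubsets.

Section MatchingPartners.
Variables (V : finType) (A : rel V) (M : {set V * V}).
Hypothesis matchingM : is_matching A M.

(* x is the head of an arc of M, and its partner is the tail of that arc
   (a vertex that is not a head is its own partner). *)
Definition is_head (x : V) : bool := [exists u, (u, x) \in M].
Definition partner (x : V) : V := odflt x [pick u | (u, x) \in M].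

Lemma partner_head u x : (u, x) \in M -> partner x = u.
Proof.
move=> uxM; rewrite /partner; case: pickP => [u' /= u'xM | /(_ u) /=];
  last by rewrite uxM.
apply/eqP; apply: contraT => u'u.
have ne : (u', x) != (u, x) by apply: contra u'u => /eqP [->].
by case: (matchingM.2 _ _ u'xM uxM ne) => _ _ _ /=; rewrite eqxx.
Qed.

Lemma partner_nonhead x : ~~ is_head x -> partner x = x.
Proof.
rewrite /is_head /partner negb_exists => /forallP notM.
by case: pickP => // u uxM; move: (notM u); rewrite uxM.
Qed.

(* No tail of M is a head of M (arcs of M are loopless). *)
Lemma tail_nonhead x y : loopless A -> (x, y) \in M -> ~~ is_head x.
Proof.
move=> loopA xyM; apply/existsP => -[u uxM].
have xy : (u, x) != (x, y).
  apply/eqP => -[_ exy]; have := matchingM.1 _ xyM.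
  by rewrite /= -exy (negbTE (loopA x)).
by case: (matchingM.2 _ _ uxM xyM xy) => _ _ /=; rewrite eqxx.
Qed.

Lemma same_partner_head x y : x != y -> partner x = partner y ->
  is_head y = ~~ is_head x.
Proof.
move=> xy pxy; case hx: (is_head x); case hy: (is_head y) => //.
  move: hx hy => /existsP [u uxM] /existsP [v vyM].
  move: pxy; rewrite (partner_head uxM) (partner_head vyM) => uv; subst v.
  have ne : (u, x) != (u, y) by apply: contra xy => /eqP [->].
  by case: (matchingM.2 _ _ uxM vyM ne); rewrite eqxx.
by move: pxy; rewrite !partner_nonhead ?hx ?hy // => /eqP; rewrite (negbTE xy).
Qed.

Definition matched_cut (S : {set V}) : {set V} :=
  [set x | (partner x \in S) != is_head x].

Definition crossing_count (R : realFieldType) (x y : V) : R :=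
  count_sets R (fun S => (x \in matched_cut S) && (y \notin matched_cut S)).

Lemma crossing_count_ge (R : realFieldType) x y : loopless A -> A x y ->
  nsets R V / 4%:R + ((x, y) \in M)%:R * (nsets R V / 4%:R)
    <= crossing_count R x y.
Proof.
move=> loopA Axy; have N0 := ltW (nsets_gt0 R V).
have xy : x != y by apply: contraTneq Axy => ->; exact: loopA.
case: (eqVneq (partner x) (partner y)) => pxy.
  have half : crossing_count R x y = nsets R V / 2%:R.
    rewrite -(count_sets_mem1 R (partner x) (~~ is_head x)).
    apply: eq_bigr => S _; rewrite !inE -pxy (same_partner_head xy pxy).
    by case: (partner x \in S); case: (is_head x).
  have M1 : ((x, y) \in M)%:R * (nsets R V / 4%:R) <= nsets R V / 4%:R.
    by rewrite ler_piMl ?divr_ge0 //; case: ((x, y) \in M).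
  rewrite half; lra.
have -> : ((x, y) \in M) = false.
  apply/negP => xyM; move: pxy; rewrite (partner_head xyM).
  by rewrite partner_nonhead ?eqxx // (tail_nonhead loopA xyM).
have quarter : crossing_count R x y = nsets R V / 4%:R.
  rewrite -(count_sets_mem2 R (~~ is_head x) (is_head y) pxy).
  apply: eq_bigr => S _; rewrite !inE.
  by case: (partner x \in S); case: (is_head x); case: (partner y \in S);
    case: (is_head y).
by rewrite quarter mul0r addr0.
Qed.

End MatchingPartners.

Lemma wcut_le_mac (R : realDomainType) (V : finType) (A : rel V)
  (w : V -> V -> R) (X : {set V}) : wcut A w X (~: X) <= mac A w.
Proof. exact: (le_bigmax 0 (fun X : {set V} => wcut A w X (~: X))). Qed.

Lemma wcut_as_arc_sum (R : realDomainType) (V : finType) (A : rel V)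
  (w : V -> V -> R) (X : {set V}) :
  wcut A w X (~: X) =
  \sum_(a : V * V | A a.1 a.2) ((a.1 \in X) && (a.2 \notin X))%:R * w a.1 a.2.
Proof.
rewrite /wcut big_mkcondr /=; apply: eq_bigr => a _; rewrite in_setC.
by case: (a.1 \in X); case: (a.2 \in X); rewrite /= ?mul1r ?mul0r.
Qed.

Lemma wtotal_wset_as_arc_sum (R : realFieldType) (V : finType) (A : rel V)
  (w : V -> V -> R) (M : {set V * V}) (c : R) :
  (forall a, a \in M -> A a.1 a.2) ->
  c * (wtotal A w / 4%:R + wset w M / 4%:R) =
  \sum_(a : V * V | A a.1 a.2) (c / 4%:R + (a \in M)%:R * (c / 4%:R)) * w a.1 a.2.
Proof.
move=> MA.
have -> : wset w M = \sum_(a : V * V | A a.1 a.2) (a \in M)%:R * w a.1 a.2.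
  rewrite /wset big_mkcond [RHS]big_mkcond /=; apply: eq_bigr => a _.
  case aM: (a \in M); last by rewrite !mul0r; case: (A _ _).
  by rewrite (MA _ aM) mul1r.
rewrite /wtotal mulrDr !mulr_suml !mulr_sumr -big_split /=.
by apply: eq_bigr => a _; field.
Qed.

Theorem mainTheorem5 (R : realFieldType) (V : finType) (A : rel V)
  (w : V -> V -> R) (M : {set V * V}) :
  loopless A ->
  (forall x y, A x y -> 0 <= w x y) ->
  is_matching A M ->
  mac A w >= wtotal A w / 4%:R + wset w M / 4%:R.
Proof.
move=> loopA w_ge0 matchingM; set N := nsets R V.
have cuts_le : \sum_(S : {set V}) wcut A w (matched_cut M S) (~: matched_cut M S)
    <= N * mac A w.
  rewrite /N nsetsE mulr_suml.
  by apply: ler_sum => S _; rewrite mul1r wcut_le_mac.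
have cuts_ge : N * (wtotal A w / 4%:R + wset w M / 4%:R)
    <= \sum_(S : {set V}) wcut A w (matched_cut M S) (~: matched_cut M S).
  under eq_bigr => S _ do rewrite wcut_as_arc_sum.
  rewrite exchange_big (wtotal_wset_as_arc_sum _ _ matchingM.1) /=.
  apply: ler_sum => -[x y] /= Axy; rewrite -mulr_suml.
  by rewrite ler_wpM2r ?w_ge0 // (crossing_count_ge matchingM).
by rewrite -(ler_pM2l (nsets_gt0 R V)) (le_trans cuts_ge cuts_le).
Qed.
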